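(* Let $X,Y$ be metric spaces and $n\ge1$, and let $f:X\multimap Y$ be a $\{1,n\}$-valued map. Then there is a continuous map $g:X\to\mathit{SP}^n(Y)$ with $u\circ g=f$; namely $g(x)=[y,\dots,y]$ if $f(x)=\{y\}$ and $g(x)=[y_1,\dots,y_n]$ if $f(x)=\{y_1,\dots,y_n\}$.
   Context: An at-most-$n$-valued map $f:X\multimap Y$ is a lower and upper semicontinuous multivalued map whose values are nonempty sets of cardinality at most $n$; it is $\{1,n\}$-valued if $\#f(x)\in\{1,n\}$ for every $x$. $\mathit{SP}^n(Y)$ is the quotient of $Y^n$ by the symmetric group permuting coordinates, with elements $[y_1,\dots,y_n]$; $u:\mathit{SP}^n(Y)\to C_n(Y)$, $u([y_1,\dots,y_n])=\{y_1,\dots,y_n\}$, with $C_n(Y)$ the space of nonempty subsets of cardinality at most $n$ (quotient topology from $Y^n$). *)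

From HB Require Import structures.
From mathcomp Require Import all_boot all_order all_algebra generic_quotient fingroup perm.
From mathcomp Require Import all_classical all_reals all_analysis.
Set Implicit Arguments. Unset Strict Implicit. Unset Printing Implicit Defensive.
Import Order.TTheory GRing.Theory Num.Theory.
Local Open Scope classical_set_scope.
Local Open Scope card_scope.

Definition Ypow (n : nat) (Y : topologicalType) := {ptws 'I_n -> Y}.

Definition perm_rel (n : nat) (Y : topologicalType) : rel (Ypow n Y) :=
  fun a b => `[< exists s : 'S_n, forall i, a i = b (s i) >].

Lemma perm_rel_refl n Y : reflexive (@perm_rel n Y).
Proof. by move=> a; apply/asboolP; exists 1%g => i; rewrite perm1. Qed.

Lemma perm_rel_sym n Y : symmetric (@perm_rel n Y).
Proof.
suff H : forall a b, perm_rel a b -> @perm_rel n Y b a.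
  by move=> a b; apply/idP/idP; apply: H.
move=> a b /asboolP [s Hs]; apply/asboolP; exists (s^-1)%g => i.
by rewrite Hs permKV.
Qed.

Lemma perm_rel_trans n Y : transitive (@perm_rel n Y).
Proof.
move=> b a c /asboolP [s Hs] /asboolP [t Ht]; apply/asboolP.
exists (s * t)%g => i; by rewrite Hs Ht permM.
Qed.

Canonical perm_equiv n Y :=
  EquivRel (@perm_rel n Y) (@perm_rel_refl n Y) (@perm_rel_sym n Y)
    (@perm_rel_trans n Y).

Definition SP (n : nat) (Y : topologicalType) : topologicalType :=
  quotient_topology {eq_quot (@perm_rel n Y)}%qT.

Definition sp_class (n : nat) (Y : topologicalType) (y : 'I_n -> Y) : SP n Y :=
  (\pi_(SP n Y) (y : Ypow n Y))%qT.

Definition u_map (n : nat) (Y : topologicalType) (q : SP n Y) : set Y :=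
  [set y | exists i : 'I_n, (generic_quotient.repr (q : {eq_quot (@perm_rel n Y)}%qT) : Ypow n Y) i = y].

Definition lsc_mv (X Y : topologicalType) (f : X -> set Y) :=
  forall V : set Y, open V -> open [set x | f x `&` V !=set0].
Definition usc_mv (X Y : topologicalType) (f : X -> set Y) :=
  forall V : set Y, open V -> open [set x | f x `<=` V].

Definition one_n_valued (n : nat) (X Y : topologicalType) (f : X -> set Y) :=
  [/\ lsc_mv f, usc_mv f & forall x, f x #= `I_1 \/ f x #= `I_n].

(* Choose for every x an enumeration t x : 'I_n -> Y of f x (constant when f x is a singleton)
   and put g x := [t x].  Near a point where f x = {y}, upper semicontinuity puts f x' inside a
   small ball around y, so every coordinate of t x' is close to y.  Near a point where f x has n
   elements, these are the centres of n pairwise disjoint small balls; lower semicontinuity makes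
   f x' meet each of them, and since t x' has only n coordinates, each ball contains exactly one
   of them, which yields a permutation of t x' that is coordinatewise close to t x. *)
From HB Require Import structures.
From mathcomp Require Import all_boot all_order all_algebra generic_quotient fingroup perm.
From mathcomp Require Import all_classical all_reals all_analysis.
Set Implicit Arguments. Unset Strict Implicit. Unset Printing Implicit Defensive.
Import Order.TTheory GRing.Theory Num.Theory.
Local Open Scope classical_set_scope.
Local Open Scope ring_scope.
Local Open Scope card_scope.

Section Cardinality.
Variables (T : Type) (n : nat).

Lemma card_eq1_set1 (A : set T) : A #= `I_1 -> exists y, A = [set y].
Proof.
move=> /card_set_bijP [h [hf hinj hsurj]].
have [y Ay hy] : (h @` A) 0%N by apply: hsurj.
exists y; apply/seteqP; split => [z Az|_ ->] //.
apply: hinj; rewrite ?inE //.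
by have := hf _ Az; rewrite hy /=; case: (h z).
Qed.

Lemma card_eq_range (A : set T) : A #= `I_n -> exists t : 'I_n -> T, range t = A.
Proof.
move=> /card_set_bijP [h [hf hinj hsurj]].
have preim (k : 'I_n) : exists y, A y /\ h y = k.
  have [y Ay hy] : (h @` A) k by apply: hsurj; rewrite /= ltn_ord.
  by exists y.
have [t Ht] := choice preim; exists t; apply/seteqP; split => [_ [k _ <-]|y Ay].
  by case: (Ht k).
have hyn : (h y < n)%N by apply: hf.
have [tA ht] := Ht (Ordinal hyn).
by exists (Ordinal hyn) => //; apply: hinj; rewrite ?inE.
Qed.

Lemma card_range_inj (a : 'I_n -> T) : range a #= `I_n -> injective a.
Proof.
move=> /card_set_bijP [h [hf hinj hsurj]].
have preim (k : 'I_n) : exists i : 'I_n, h (a i) = k.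
  have [_ [i _ <-] hk] : (h @` range a) k by apply: hsurj; rewrite /= ltn_ord.
  by exists i.
have [c Hc] := choice preim.
have cinj : injective c by move=> k k' e; apply: ord_inj; rewrite -(Hc k) -(Hc k') e.
have [c' cc' c'c] := injF_bij cinj.
have hac' i : h (a i) = c' i by rewrite -{1}(c'c i) Hc.
move=> i j aij; rewrite -(c'c i) -(c'c j); congr c.
by apply: ord_inj; rewrite -!hac' aij.
Qed.

End Cardinality.

Section SymmetricProduct.
Variables (Y : topologicalType) (n : nat).

Lemma sp_class_perm (a b : 'I_n -> Y) : perm_rel (a : Ypow n Y) b -> sp_class a = sp_class b.
Proof. by move=> h; apply/eqquotP. Qed.

Lemma perm_rel_inj (a b : Ypow n Y) (s : 'I_n -> 'I_n) : injective s ->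
  (forall i, a i = b (s i)) -> perm_rel a b.
Proof. by move=> sinj h; apply/asboolP; exists (perm sinj) => i; rewrite permE. Qed.

Lemma perm_rel_range (a b : Ypow n Y) : perm_rel a b -> range a = range b.
Proof.
move=> /asboolP [s Hs]; apply/seteqP; split => _ [i _ <-].
  by exists (s i) => //; rewrite Hs.
by exists ((s^-1)%g i) => //; rewrite Hs permKV.
Qed.

Lemma range_perm_rel (a b : 'I_n -> Y) : injective a -> range a = range b ->
  perm_rel (a : Ypow n Y) b.
Proof.
move=> ainj eab.
have preim i : exists j, b j = a i.
  have [j _ ?] : range b (a i) by rewrite -eab; exists i.
  by exists j.
have [s Hs] := choice preim.
apply: (@perm_rel_inj _ _ s) => [i j sij|i]; last by rewrite Hs.
by apply: ainj; rewrite -Hs sij Hs.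
Qed.

Lemma u_map_sp_class (a : 'I_n -> Y) : u_map (sp_class a) = range a.
Proof.
have : perm_rel (generic_quotient.repr (sp_class a : {eq_quot (@perm_rel n Y)}%qT) : Ypow n Y) a.
  by apply/(eqquotP {eq_quot (@perm_rel n Y)}%qT); exact: reprK.
move=> /perm_rel_range <-; apply/seteqP; split => y; first by case=> i <-; exists i.
by case=> i _ <-; exists i.
Qed.

End SymmetricProduct.

Section SymmetricProductMetric.
Variables (R : realType) (Y : pseudoMetricType R) (n : nat).

Definition prod_ball (p : 'I_n -> Y) (r : R) : set (Ypow n Y) :=
  [set q | forall i, ball (p i) r (q i)].

Definition sp_ball (p : 'I_n -> Y) (r : R) : set (SP n Y) := @sp_class n Y @` prod_ball p r.

Lemma open_prod_ball (O : set (Ypow n Y)) (p : Ypow n Y) : open O -> O p ->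
  exists2 r : R, 0 < r & prod_ball p r `<=` O.
Proof.
move=> oO Op.
pose F := filter_from [set r : R | 0 < r] (prod_ball p).
have FF : Filter F.
  apply: filter_from_filter; first by exists 1; rewrite /= ltr01.
  move=> i j i0 j0; exists (Num.min i j); first by rewrite /= lt_min i0.
  by move=> q Hq; split => k; apply: (le_ball _ (Hq k)); rewrite ge_min lexx ?orbT.
have : F --> p.
  apply/cvg_sup => i A; rewrite nbhsE => -[B [[C oC CB] Bp] BA].
  have /nbhs_ballP [r r0 rC] : nbhs (p i) C by apply: open_nbhs_nbhs; rewrite -CB in Bp.
  by rewrite nbhs_filterE; exists r => // q Hq; apply: BA; rewrite -CB; exact: rC (Hq i).
by move=> /(_ O); rewrite nbhs_filterE => -[|r r0 rO]; [exact: open_nbhs_nbhs|exists r].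
Qed.

Lemma open_sp_ball (A : set (SP n Y)) (p : 'I_n -> Y) : open A -> A (sp_class p) ->
  exists2 r : R, 0 < r & sp_ball p r `<=` A.
Proof.
move=> oA Ap.
have oO : open [set q : Ypow n Y | A (sp_class q)] by exact: oA.
by have [r r0 rO] := open_prod_ball oO Ap; exists r => // _ [q /rO Aq <-].
Qed.

Lemma continuous_sp_class (X : topologicalType) (t : X -> 'I_n -> Y) :
  (forall x r, 0 < r -> \forall x' \near x, sp_ball (t x) r (sp_class (t x'))) ->
  continuous (fun x => sp_class (t x)).
Proof.
move=> near_t; apply/continuousP => A oA; rewrite openE => x Ax.
have [r r0 rA] := open_sp_ball oA Ax.
by apply: filterS (near_t x r r0) => x' /rA.
Qed.

Lemma sp_ball_disjoint (p q : 'I_n -> Y) (r : R) :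
  (forall i j z, ball (p i) r z -> ball (p j) r z -> i = j) ->
  (forall i, exists j, ball (p i) r (q j)) -> sp_ball p r (sp_class q).
Proof.
move=> disj near_q; have [s Hs] := choice near_q.
have sinj : injective s by move=> i j sij; apply: (disj i j (q (s i))); rewrite // sij.
exists (fun i => q (s i)) => //; apply: sp_class_perm.
exact: (@perm_rel_inj _ _ _ _ s).
Qed.

End SymmetricProductMetric.

Lemma near0_disjoint_balls (R : realType) (Y : metricType R) (n : nat) (p : 'I_n -> Y) :
  injective p ->
  \forall r \near (0 : R)^'+, forall i j z, ball (p i) r z -> ball (p j) r z -> i = j.
Proof.
move=> pinj.
have : \forall r \near (0 : R)^'+, forall ij : 'I_n * 'I_n,
    ij.1 != ij.2 -> r + r <= mdist (p ij.1) (p ij.2).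
  apply: filter_forall => -[i j] /=; case: eqVneq => [_|ne]; first exact: nearW.
  have d0 : 0 < mdist (p i) (p j) / 2 by rewrite divr_gt0 // mdist_gt0 (inj_eq pinj).
  by apply: filterS (nbhs_right_lt d0) => r rd _; rewrite [leRHS]splitr lerD // ltW.
apply: filterS => r sep i j z piz pjz; apply/eqP; apply: contraT => ne.
have := ball_triangle piz (ball_sym pjz).
by rewrite ballEmdist /= ltNge (sep (i, j) ne).
Qed.

Section SemicontinuousEnumeration.
Variables (R : realType) (X : topologicalType) (Y : metricType R) (n : nat).
Variables (f : X -> set Y) (t : X -> 'I_n -> Y).
Hypothesis range_t : forall x, range (t x) = f x.

Lemma usc_near_set1 (x : X) (y : Y) (r : R) : usc_mv f -> f x = [set y] ->
  (forall i, t x i = y) -> 0 < r -> \forall x' \near x, sp_ball (t x) r (sp_class (t x')).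
Proof.
move=> usc fxy txy r0; pose V := (ball y r)°.
have : nbhs x [set x' | f x' `<=` V].
  apply: open_nbhs_nbhs; split; first exact/usc/open_interior.
  rewrite /= fxy => _ ->; apply: nbhs_singleton; apply: nbhs_interior.
  by apply/nbhs_ballP; exists r.
apply: filterS => x' fx'V; exists (t x') => // i; rewrite txy.
by apply: interior_subset; apply: fx'V; rewrite -range_t; exists i.
Qed.

Lemma lsc_near_inj (x : X) (r : R) : lsc_mv f -> injective (t x) ->
  0 < r -> \forall x' \near x, sp_ball (t x) r (sp_class (t x')).
Proof.
move=> lsc tinj r0.
have [r' [r'0 r'r disj]] : exists r', [/\ 0 < r', r' <= r &
    forall i j z, ball (t x i) r' z -> ball (t x j) r' z -> i = j].
  have : \forall s \near (0 : R)^'+, [/\ 0 < s, s < r &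
      forall i j z, ball (t x i) s z -> ball (t x j) s z -> i = j].
    near=> s; split; near: s;
      [exact: nbhs_right_gt|exact: nbhs_right_lt|exact: near0_disjoint_balls].
  by move=> /filter_ex [s [s0 sr sd]]; exists s; split => //; exact: ltW.
have : \forall x' \near x, forall i, f x' `&` (ball (t x i) r')° !=set0.
  apply: filter_forall => i; apply: open_nbhs_nbhs; split; first exact/lsc/open_interior.
  exists (t x i); split; first by rewrite -range_t; exists i.
  by apply: nbhs_singleton; apply: nbhs_interior; apply/nbhs_ballP; exists r'.
apply: filterS => x' meet.
have [q q_ball q_eq] : sp_ball (t x) r' (sp_class (t x')).
  apply: sp_ball_disjoint => // i; have [z [fz /interior_subset Vz]] := meet i.
  by move: fz; rewrite -range_t => -[j _ tj]; exists j; rewrite tj.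
by exists q => // i; exact: (le_ball r'r (q_ball i)).
Unshelve. all: by end_near.
Qed.

End SemicontinuousEnumeration.

Theorem mainTheorem14 (R : realType) (X Y : metricType R) (n : nat)
  (f : X -> set Y) :
  (0 < n)%N -> one_n_valued n f ->
  exists g : X -> SP n Y,
    [/\ continuous g,
        (forall x, u_map (g x) = f x),
        (forall x (y : Y), f x = [set y] -> g x = sp_class (fun _ : 'I_n => y))
      & (forall x (y : 'I_n -> Y), f x #= `I_n -> f x = range y ->
           g x = sp_class y)].
Proof.
move=> n0 [lsc usc fcard].
have enum x : exists t : 'I_n -> Y, range t = f x.
  case: (fcard x) => [/card_eq1_set1 [y ->]|/card_eq_range //].
  exists (fun _ => y); apply/seteqP; split => [_ [_ _ <-]|_ ->] //.
  by exists (Ordinal n0).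
have [t range_t] := choice enum.
have t_set1 x y i : f x = [set y] -> t x i = y.
  move=> fxy; have : range (t x) (t x i) by exists i.
  by rewrite range_t fxy.
exists (fun x => sp_class (t x)); split.
- apply: continuous_sp_class => x r r0.
  have [[y fxy]|not_set1] := pselect (exists y, f x = [set y]).
    exact: (usc_near_set1 range_t usc fxy (fun i => t_set1 x y i fxy)).
  apply: (lsc_near_inj range_t) => //; apply: card_range_inj; rewrite range_t.
  by case: (fcard x) => // /card_eq1_set1 [y fxy]; case: not_set1; exists y.
- by move=> x; rewrite u_map_sp_class range_t.
- by move=> x y fxy; congr sp_class; apply: funext => i; exact: t_set1.
- move=> x y fxn fxy; apply/sp_class_perm/range_perm_rel; last by rewrite range_t.
  by apply: card_range_inj; rewrite range_t.
Qed.
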